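(* Let $q$ be a prime number, $l\ge 2$ an integer, and $\alpha=\alpha_1/\alpha_2\in\mathbb{Q}\text{-}\mathcal{KS}(q^{l})$ with $\gcd(\alpha_1,q)=1$. Then $$1+q-q^{l-1}\le\alpha\le q^{l-1}+q-1.$$
   Context: Every nonzero rational $\alpha$ is written $\alpha=\alpha_1/\alpha_2$ with $\alpha_1\in\mathbb{Z}$, $\alpha_2$ a positive integer and $\gcd(\alpha_1,\alpha_2)=1$. For an integer $N\ge 2$ and a nonzero rational $\alpha=\alpha_1/\alpha_2$, $N$ is called an $\alpha$-Korselt number if $N\neq\alpha$ and $\alpha_2p-\alpha_1$ divides $\alpha_2N-\alpha_1$ (in $\mathbb{Z}$) for every prime divisor $p$ of $N$. $\mathbb{Q}\text{-}\mathcal{KS}(N)$ is the set of all $\beta\in\mathbb{Q}\setminus\{0,N\}$ such that $N$ is a $\beta$-Korselt number. *)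

From mathcomp Require Import all_boot all_order all_algebra.
Set Implicit Arguments. Unset Strict Implicit. Unset Printing Implicit Defensive.
Import Order.TTheory GRing.Theory Num.Theory.
Local Open Scope ring_scope.

(* alpha = numq alpha / denq alpha, with denq > 0 and coprime: the paper's
   alpha_1 / alpha_2 representation. *)
Definition Korselt (N : nat) (alpha : rat) : Prop :=
  (2 <= N)%N /\ alpha != N%:R /\
  forall p : nat, prime p -> (p %| N)%N ->
    (denq alpha * p%:Z - numq alpha %| denq alpha * N%:Z - numq alpha)%Z.

Definition QKS (N : nat) (beta : rat) : Prop :=
  beta != 0 /\ beta != N%:R /\ Korselt N beta.

From mathcomp Require Import all_boot all_order all_algebra.
From mathcomp Require Import ring lra.
Import Order.TTheory GRing.Theory Num.Theory.
Local Open Scope ring_scope.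

(* Write alpha = a1/a2 and d = a2 q - a1.  Since a2 q^l - a1 = d + a2 q (q^(l-1) - 1),
   the Korselt condition at the prime q says that d divides a2 q (q^(l-1) - 1); d is
   coprime to a2 (because a1 is) and to q (by hypothesis), so d divides q^(l-1) - 1.
   Hence |a2 q - a1| <= q^(l-1) - 1 <= a2 (q^(l-1) - 1), i.e. |q - alpha| <= q^(l-1) - 1. *)

Lemma coprimez_mulBl (a b c : int) : coprimez (b * c - a) b = coprimez a b.
Proof.
by rewrite coprimez_sym [RHS]coprimez_sym /coprimez mulrC gcdzMDl gcdzN.
Qed.

Lemma dvdz_Korselt_pred (a1 a2 q m : int) :
  coprimez a1 a2 -> coprimez a1 q ->
  (a2 * q - a1 %| a2 * (q * m) - a1)%Z -> (a2 * q - a1 %| m - 1)%Z.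
Proof.
move=> co_a1a2 co_a1q.
have -> : a2 * (q * m) - a1 = (a2 * q - a1) + a2 * (q * (m - 1)) by ring.
rewrite rpredDl ?dvdzz // Gauss_dvdzr ?coprimez_mulBl //.
by rewrite Gauss_dvdzr // mulrC coprimez_mulBl.
Qed.

Lemma ler_norm_dvdz (d m : int) : m != 0 -> (d %| m)%Z -> `|d| <= `|m|.
Proof.
by move=> m_neq0; rewrite dvdzE -!abszE lez_nat; apply: dvdn_leq; rewrite absz_gt0.
Qed.

Lemma ler_dist_num_den (x : rat) (n M : int) :
  0 <= M -> `|denq x * n - numq x| <= M -> `|n%:~R - x| <= M%:~R.
Proof.
move=> M_ge0 le_dM; have den_gt0 : (0 : rat) < (denq x)%:~R by rewrite ltr0z denq_gt0.
rewrite -(ler_pM2r den_gt0) -[X in _ * X <= _](gtr0_norm den_gt0) -normrM.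
rewrite mulrBl -numqE mulrC -intrM -intrB -intr_norm -intrM ler_int.
apply: (le_trans le_dM); rewrite ler_peMr // -gtz0_ge1; exact: denq_gt0.
Qed.

Theorem proposition2p4 (q l : nat) (alpha : rat) :
  prime q -> (2 <= l)%N -> QKS (q ^ l) alpha ->
  coprime `|numq alpha|%N q ->
  1 + q%:R - (q ^ l.-1)%:R <= alpha /\ alpha <= (q ^ l.-1)%:R + q%:R - 1.
Proof.
move=> q_pr l_ge2 [_ [_ [_ [_ korselt]]]] co_num_q.
set Q := (q ^ l.-1)%N.
have l_gt0 : (0 < l)%N by apply: leq_trans l_ge2.
have qlE : (q ^ l)%N = (q * Q)%N by rewrite -expnS prednK.
have Q_gt1 : (1 < Q)%N.
  apply: leq_trans (prime_gt1 q_pr) _.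
  by rewrite -{1}(expn1 q) (leq_pexp2l (prime_gt0 q_pr)) // ltn_predRL.
have dvd_Qpred : (denq alpha * q - numq alpha %| Q%:Z - 1)%Z.
  apply: dvdz_Korselt_pred => //; first by rewrite coprimezE coprime_num_den.
  by rewrite -PoszM -qlE korselt // dvdn_exp.
have Qpred_gt0 : 0 < Q%:Z - 1 by rewrite subr_gt0 ltz_nat.
have dist_le : `|(q%:Z)%:~R - alpha| <= (Q%:Z - 1)%:~R.
  apply: ler_dist_num_den; first exact: ltW.
  by rewrite -[X in _ <= X](gtr0_norm Qpred_gt0) ler_norm_dvdz ?lt0r_neq0.
move: dist_le; rewrite intrB -!pmulrn ler_distlC => /andP [lo hi]; split; lra.
Qed.
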